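(* Consider any divide-and-conquer algorithm for computing $\mu(\cdot)$ on $n$-column matrices of $O(k)$-bit integers, i.e. an assignment of an output (bit string) $s(A)$ to each such matrix $A$ (a sub-problem) together with a join such that for any two such matrices $A_0,A_1$, the output for their vertical concatenation $A_{01}$ ($A_0$'s rows followed by $A_1$'s rows) is computed by the join from $s(A_0)$ and $s(A_1)$ alone, and $\mu(A)$ is determined by $s(A)$. Then for every $r\le n(n+1)/2$, the output of a sub-problem of $r$ rows has size $\Omega(kr)$ bits (in the worst case over $r$-row matrices). In particular, solutions to sub-problems of size $O(n^2)$ require $\Omega(kn^2)$ bits.
   Context: For integers $i\le j$, $[i:j]=\{i,\dots,j\}$; $\mathbb{I}_n=\{[i:j]:1\le i\le j\le n\}$. For a matrix $A=[a_{ij}]$ with $n$ columns, $\mu_A(J)=\max_{k'\ge1}\sum_{i=1}^{k'}\sum_{j\in J}a_{ij}$ (maximum over row indices $k'$) for $J\in\mathbb{I}_n$, and the maximum top subarray sum of $A$ is $\mu(A)=\max_{J\in\mathbb{I}_n}\mu_A(J)$. *)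

From mathcomp Require Import all_boot all_order all_algebra.
Set Implicit Arguments. Unset Strict Implicit. Unset Printing Implicit Defensive.
Import Order.TTheory GRing.Theory Num.Theory.
Local Open Scope ring_scope.

(* Indices are 0-based: rows 0..m-1, columns 0..n-1.  The interval [i:j]
   (1-based in the paper) is represented by the pair (i,j) with i <= j < n. *)

Definition topsum (m n : nat) (A : 'M[int]_(m, n)) (kk i j : nat) : int :=
  \sum_(t < m | (t <= kk)%N) \sum_(l < n | (i <= l <= j)%N) A t l.

Definition maxl (s : seq int) : int := foldr Num.max (head 0 s) s.

Definition muJ (m n : nat) (A : 'M[int]_(m, n)) (i j : nat) : int :=
  maxl [seq topsum A kk i j | kk <- iota 0 m].

Definition intervals (n : nat) : seq (nat * nat) :=
  [seq (i, j) | i <- iota 0 n, j <- iota i (n - i)].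

Definition mu (m n : nat) (A : 'M[int]_(m, n)) : int :=
  maxl [seq muJ A p.1 p.2 | p <- intervals n].

Definition bounded (b m n : nat) (A : 'M[int]_(m, n)) : Prop :=
  forall i j, (absz (A i j) < 2 ^ b)%N.

From mathcomp Require Import all_boot all_order all_algebra zify.
Set Implicit Arguments. Unset Strict Implicit. Unset Printing Implicit Defensive.
Import Order.TTheory GRing.Theory Num.Theory.
Local Open Scope ring_scope.

(* An encoding argument.  Enumerate the column intervals as J_0, J_1, ...  For
   numbers X_0, ..., X_(r-1) < 2^k, the data matrix has r rows whose top t+1
   rows sum to 2^k v(J_t) + X_t e_(J_t.1), where the probe vector v(J) is a
   +-1 vector peaking on J.  Stacking above it a tall block of copies of
   v(J_s) forces the maximum top subarray onto the interval J_s and the first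
   N + s + 1 rows, and its value reveals X_s.  The output for the stacked
   matrix is the join of the output for the block and the output for the data
   matrix, so the latter determines every X_t: X |-> s(data matrix) is
   injective on 2^(kr) points and some output has at least kr bits.  All
   entries fit in 4k bits. *)

Lemma maxl_ub (s : seq int) x : x \in s -> x <= maxl s.
Proof.
rewrite /maxl; move: (head 0 s) => h; elim: s => //= a s IH.
by rewrite inE le_max => /orP [/eqP ->|/IH ->]; rewrite ?lexx ?orbT.
Qed.

Lemma maxl_le (s : seq int) b : s != [::] -> {in s, forall x, x <= b} -> maxl s <= b.
Proof.
case: s => // a s _ sb; have ab := sb a (mem_head _ _).
rewrite /maxl /= ge_max ab /=.
elim: s sb => //= c s IH sb; rewrite ge_max sb ?inE ?eqxx ?orbT //=.
by apply: IH => x; rewrite inE => /orP [/eqP ->|xs]; apply: sb; rewrite !inE ?eqxx ?xs ?orbT.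
Qed.

Lemma mem_intervals n p : (p \in intervals n) = (p.1 <= p.2 < n)%N.
Proof.
apply/allpairsPdep/idP.
  by move=> [i [j [+ + ->]]] /=; rewrite !mem_iota; lia.
case: p => i j /= ij; exists i, j; rewrite !mem_iota; split=> //; lia.
Qed.

Lemma uniq_intervals n : uniq (intervals n).
Proof.
apply: allpairs_uniq_dep => [|i _|[a b] [c d] _ _ /= [-> ->]] //; exact: iota_uniq.
Qed.

Lemma size_intervals n : (size (intervals n) * 2 = n * n.+1)%N.
Proof.
rewrite /intervals size_allpairs_dep.
have -> : sumn [seq size (iota i (n - i)) | i <- iota 0 n] = \sum_(0 <= i < n) (n - i)%N.
  by rewrite sumnE big_map /index_iota subn0; apply: eq_bigr => i _; rewrite size_iota.
rewrite big_nat_rev /=.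
have -> : \sum_(0 <= i < n) (n - (0 + n - i.+1))%N = \sum_(0 <= i < n) i.+1.
  by rewrite !big_nat; apply: eq_bigr => i /andP [_ lt_i_n]; lia.
elim: n => [|n IH]; first by rewrite big_geq.
by rewrite big_nat_recr //= mulnDl IH; lia.
Qed.

Lemma topsum_le_mu m n (A : 'M[int]_(m, n)) kk i j :
  (kk < m)%N -> (i <= j < n)%N -> topsum A kk i j <= mu A.
Proof.
move=> lt_kk_m ij; apply: (@le_trans _ _ (muJ A i j)).
  by apply: maxl_ub; apply/mapP; exists kk; rewrite ?mem_iota.
by apply: maxl_ub; apply/mapP; exists (i, j); rewrite ?mem_intervals.
Qed.

Lemma mu_le m n (A : 'M[int]_(m, n)) b : (0 < m)%N -> (0 < n)%N ->
  (forall kk i j, (kk < m)%N -> (i <= j < n)%N -> topsum A kk i j <= b) -> mu A <= b.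
Proof.
move=> m_gt0 n_gt0 Ab; apply: maxl_le => [|x /mapP [[i j]]].
  have : (0, 0)%N \in intervals n by rewrite mem_intervals.
  by case: (intervals n).
rewrite mem_intervals /= => ij ->; apply: maxl_le => [|y /mapP [kk]].
  by rewrite -size_eq0 size_map size_iota -lt0n.
by rewrite mem_iota => kk_lt ->; apply: Ab.
Qed.

Lemma big_ord_range (R : nmodType) (F : nat -> R) n i j :
  \sum_(l < n | (i <= l <= j)%N) F l = \sum_(i <= l < minn j.+1 n) F l.
Proof.
rewrite -(big_mkord (fun l => (i <= l <= j)%N)) (@big_nat_widenl _ _ _ i 0) //.
rewrite (@big_nat_widen _ _ _ _ (minn j.+1 n) n) ?geq_minr //.
rewrite [in RHS]big_nat_cond big_nat_cond; apply: eq_bigl => l /=; lia.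
Qed.

Lemma topsum_col_mx m0 m1 n (B : 'M[int]_(m0, n)) (A : 'M[int]_(m1, n)) kk i j :
  topsum (col_mx B A) kk i j =
  topsum B kk i j + (if (m0 <= kk)%N then topsum A (kk - m0) i j else 0).
Proof.
rewrite /topsum big_mkcond big_split_ord /=; congr (_ + _).
  rewrite [RHS]big_mkcond; apply: eq_bigr => t _ /=.
  by case: ifP => // _; apply: eq_bigr => l _; rewrite col_mxEu.
case: leqP => [le_m0kk|lt_kk_m0]; last by rewrite big1 // => t _; rewrite ifN //; lia.
rewrite [RHS]big_mkcond; apply: eq_bigr => t _ /=.
rewrite leq_subRL //; case: ifP => // _.
by apply: eq_bigr => l _; rewrite col_mxEd.
Qed.

Lemma topsum_const_rows m n (v : nat -> int) kk i j :
  topsum (\matrix_(t < m, l < n) v l) kk i j =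
  (minn kk.+1 m)%:Z * \sum_(l < n | (i <= l <= j)%N) v l.
Proof.
rewrite /topsum (eq_bigl (fun t : 'I_m => (0 <= t <= kk)%N)) //.
under eq_bigr do under eq_bigr do rewrite mxE.
rewrite big_ord_range (big_ord_range (fun=> \sum_(i <= l < minn j.+1 n) v l)).
by rewrite sumr_const_nat subn0 -mulr_natl natz.
Qed.

Lemma bounded_col_mx b m0 m1 n (A0 : 'M[int]_(m0, n)) (A1 : 'M[int]_(m1, n)) :
  bounded b A0 -> bounded b A1 -> bounded b (col_mx A0 A1).
Proof.
move=> A0b A1b i j; rewrite -[i]splitK.
by case: (split i) => i' /=; rewrite ?col_mxEu ?col_mxEd.
Qed.

Lemma ler_pM_nat (c N : nat) (x b : int) : (c <= N)%N -> x <= b -> 0 <= b ->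
  c%:Z * x <= N%:Z * b.
Proof.
move=> le_cN le_xb b_ge0.
by apply: le_trans (ler_wpM2l _ le_xb) (ler_wpM2r b_ge0 _); rewrite ?lez_nat.
Qed.

Definition diffmx m n (P : nat -> nat -> int) : 'M[int]_(m, n) :=
  \matrix_(t < m, l < n) (P t.+1 l - P t l).

Lemma topsum_diffmx m n (P : nat -> nat -> int) kk i j :
  (forall l, P 0%N l = 0) -> (kk < m)%N ->
  topsum (diffmx m n P) kk i j = \sum_(l < n | (i <= l <= j)%N) P kk.+1 l.
Proof.
move=> P0 lt_kk_m; rewrite /topsum (eq_bigl (fun t : 'I_m => (0 <= t <= kk)%N)) //.
under eq_bigr do under eq_bigr do rewrite mxE.
under eq_bigr do rewrite sumrB.
pose S t := \sum_(l < n | (i <= l <= j)%N) P t l.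
rewrite (big_ord_range (fun t => S t.+1 - S t)) (minn_idPl lt_kk_m) telescope_sumr //.
by rewrite [S 0%N]big1 ?subr0.
Qed.

(* The endpoint bonuses make [probe_sum q p < probe_sum p p] even when q
   strictly contains p. *)
Definition probe (p : nat * nat) (l : nat) : int :=
  2 * ((p.1 <= l <= p.2)%N : nat)%:Z - 1 + ((l == p.1) : nat)%:Z + ((l == p.2) : nat)%:Z.

Definition probe_sum (p q : nat * nat) : int := \sum_(q.1 <= l < q.2.+1) probe p l.

Lemma sum_probe p b c : (b <= c)%N ->
  \sum_(b <= l < c) probe p l =
  2 * (minn c p.2.+1 - maxn b p.1)%N%:Z - (c - b)%N%:Z
  + ((b <= p.1 < c)%N : nat)%:Z + ((b <= p.2 < c)%N : nat)%:Z.
Proof.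
elim: c => [|c IH] le_bc; first by rewrite big_geq //; lia.
have [->|lt_bc] := eqVneq b c.+1; first by rewrite big_geq //; lia.
by rewrite big_nat_recr 1?IH /probe //=; lia.
Qed.

Lemma sum_indicator a b c : (b <= c)%N ->
  \sum_(b <= l < c) ((l == a) : nat)%:Z = ((b <= a < c)%N : nat)%:Z.
Proof.
elim: c => [|c IH] le_bc; first by rewrite big_geq //; lia.
have [->|lt_bc] := eqVneq b c.+1; first by rewrite big_geq //; lia.
by rewrite big_nat_recr 1?IH //=; lia.
Qed.

Lemma probe_sum_self p : (p.1 <= p.2)%N -> probe_sum p p = (p.2.+1 - p.1)%N%:Z + 2.
Proof. by move=> p_ok; rewrite /probe_sum sum_probe //; lia. Qed.

Lemma probe_sum_lt_diag p q : (p.1 <= p.2)%N -> (q.1 <= q.2)%N -> q != p ->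
  probe_sum p q < probe_sum p p.
Proof.
case: p q => [i j] [i' j'] /= ij ij'; rewrite xpair_eqE negb_and => /orP ne.
by rewrite /probe_sum !sum_probe //=; case: ne => /eqP; lia.
Qed.

Lemma probe_sum_lt_diag_swap p q : (p.1 <= p.2)%N -> (q.1 <= q.2)%N -> q != p ->
  probe_sum q p < probe_sum p p.
Proof.
case: p q => [i j] [i' j'] /= ij ij'; rewrite xpair_eqE negb_and => /orP ne.
by rewrite /probe_sum !sum_probe //=; case: ne => /eqP; lia.
Qed.

Lemma probe_sum_le p q n : (q.1 <= q.2 < n)%N -> probe_sum p q <= n%:Z + 2.
Proof. by case: q => [i j] /= ij; rewrite /probe_sum sum_probe //=; lia. Qed.

Lemma probe_bound p l : -1 <= probe p l <= 3.
Proof. by rewrite /probe; lia. Qed.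

Lemma expn_4k_ge k : (0 < k)%N -> (8 * 2 ^ k <= 2 ^ (4 * k))%N.
Proof. by move=> k_gt0; rewrite -(expnD 2 3) leq_exp2l //; lia. Qed.

Section Gadget.

Variables (n k r : nat) (X : nat -> nat).
Hypothesis X_lt : forall t, (X t < 2 ^ k)%N.

Local Notation M := (2 ^ k)%N.

Definition interval_at (t : nat) : nat * nat := nth (0%N, 0%N) (intervals n) t.
Local Notation J := interval_at.

Lemma interval_at_valid t : (t < size (intervals n))%N -> ((J t).1 <= (J t).2 < n)%N.
Proof. by move=> lt_t; rewrite -mem_intervals mem_nth. Qed.

Lemma interval_at_inj t t' : (t < size (intervals n))%N -> (t' < size (intervals n))%N ->
  J t = J t' -> t = t'.
Proof. by move=> lt_t lt_t' /eqP; rewrite nth_uniq ?uniq_intervals // => /eqP. Qed.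

Definition prefix_row (t l : nat) : int :=
  if t is t'.+1 then M%:Z * probe (J t') l + (X t')%:Z * ((l == (J t').1) : nat)%:Z
  else 0.

Definition prefix_weight (t : nat) (q : nat * nat) : int :=
  M%:Z * probe_sum (J t) q + (X t)%:Z * ((q.1 <= (J t).1 <= q.2)%N : nat)%:Z.

Definition data_mx : 'M[int]_(r, n) := diffmx r n prefix_row.

(* Exceeds every [prefix_weight], so an optimal top subarray of the stacked
   matrix must use the interval of the query. *)
Definition query_height : nat := (M * (n + 3)).+1.

Definition query_mx (s : nat) : 'M[int]_(query_height, n) :=
  \matrix_(t < query_height, l < n) probe (J s) l.

Lemma sum_prefix_row t q : (q.1 <= q.2 < n)%N ->
  \sum_(l < n | (q.1 <= l <= q.2)%N) prefix_row t.+1 l = prefix_weight t q.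
Proof.
move=> /andP [le_q lt_q]; rewrite big_ord_range (minn_idPl lt_q) big_split /=.
by rewrite -!mulr_sumr sum_indicator ?ltnS // leqW.
Qed.

Lemma prefix_weight_lt t q : prefix_weight t q < M%:Z * (probe_sum (J t) q + 1).
Proof. by rewrite mulrDr mulr1 ltrD2l; have := X_lt t; case: (_ && _) => /=; lia. Qed.

Lemma prefix_weight_diag t : ((J t).1 <= (J t).2)%N ->
  prefix_weight t (J t) = M%:Z * probe_sum (J t) (J t) + (X t)%:Z.
Proof. by move=> le_J; rewrite /prefix_weight leqnn le_J mulr1. Qed.

Lemma topsum_query_data s kk q : (kk < query_height + r)%N -> (q.1 <= q.2 < n)%N ->
  topsum (col_mx (query_mx s) data_mx) kk q.1 q.2 =
  (minn kk.+1 query_height)%:Z * probe_sum (J s) q +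
  (if (query_height <= kk)%N then prefix_weight (kk - query_height) q else 0).
Proof.
move=> lt_kk q_ok; rewrite topsum_col_mx topsum_const_rows.
rewrite big_ord_range (minn_idPl (proj2 (andP q_ok))).
have [le_N_kk|//] := leqP query_height kk.
by rewrite /data_mx topsum_diffmx ?sum_prefix_row //; lia.
Qed.

Section Query.

Variable s : nat.
Hypothesis r_le : (r <= size (intervals n))%N.
Hypothesis lt_s_r : (s < r)%N.

Let lt_s : (s < size (intervals n))%N := leq_trans lt_s_r r_le.

Lemma topsum_query_data_diag :
  topsum (col_mx (query_mx s) data_mx) (query_height + s) (J s).1 (J s).2 =
  (query_height + M)%:Z * probe_sum (J s) (J s) + (X s)%:Z.
Proof.
have /andP [le_J lt_J] := interval_at_valid lt_s.
rewrite topsum_query_data ?interval_at_valid ?ltn_add2l // leq_addr addKn.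
rewrite prefix_weight_diag // (minn_idPr _) ?PoszD ?mulrDl ?addrA //.
by rewrite /query_height; lia.
Qed.

Lemma topsum_query_data_le kk q : (kk < query_height + r)%N -> (q.1 <= q.2 < n)%N ->
  topsum (col_mx (query_mx s) data_mx) kk q.1 q.2 <=
  (query_height + M)%:Z * probe_sum (J s) (J s) + (X s)%:Z.
Proof.
move=> lt_kk q_ok; rewrite topsum_query_data // PoszD mulrDl.
set N := query_height; set p := J s; set w := probe_sum p p.
have /andP [le_p _] := interval_at_valid lt_s.
have w_gt0 : 0 < w by rewrite /w probe_sum_self //; lia.
have Mw_ge0 : 0 <= M%:Z * w by rewrite mulr_ge0 // ltW.
have le_minn : (minn kk.+1 N <= N)%N by rewrite geq_minr.
have data_index : (N <= kk)%N -> exists2 t, (t < size (intervals n))%N & (kk - N)%N = t.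
  by move=> le_N_kk; exists (kk - N)%N => //; apply: leq_trans r_le; lia.
have [->|q_ne] := eqVneq q p.
  have := ler_pM_nat le_minn (lexx w) (ltW w_gt0).
  case: (leqP N kk) => [/data_index [t lt_t ->]|]; last by lia.
  have [->|t_ne] := eqVneq t s; first by rewrite prefix_weight_diag // -/p -/w; lia.
  have J_ne : J t != p by apply: contra_neq t_ne; exact: interval_at_inj.
  have /andP [le_t _] := interval_at_valid lt_t.
  have := probe_sum_lt_diag_swap le_p le_t J_ne; rewrite -/p -/w -lezD1 => lt_w.
  have := ler_wpM2l (ler0n _ M) lt_w; have := prefix_weight_lt t p; lia.
have := probe_sum_lt_diag le_p (proj1 (andP q_ok)) q_ne; rewrite -/p -/w -lezD1 => lt_w.
have ps_le : probe_sum p q <= w - 1 by rewrite lerBrDr.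
have w1_ge0 : 0 <= w - 1 by rewrite subr_ge0.
have := ler_pM_nat le_minn ps_le w1_ge0; rewrite mulrBr mulr1.
case: (leqP N kk) => [/data_index [t lt_t ->]|]; last by lia.
have N_eq : N%:Z = M%:Z * (n%:Z + 3) + 1 by rewrite /N /query_height; lia.
have := ler_wpM2l (ler0n _ M) (probe_sum_le (J t) q_ok).
by have := prefix_weight_lt t q; rewrite !mulrDr in N_eq *; lia.
Qed.

Lemma mu_query_data : (0 < n)%N ->
  mu (col_mx (query_mx s) data_mx) =
  (query_height + M)%:Z * probe_sum (J s) (J s) + (X s)%:Z.
Proof.
move=> n_gt0; apply/le_anti/andP; split.
  by apply: mu_le => // kk i j lt_kk ij; exact: (@topsum_query_data_le kk (i, j)).
rewrite -topsum_query_data_diag.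
by apply: topsum_le_mu; rewrite ?ltn_add2l ?interval_at_valid.
Qed.

End Query.

Lemma prefix_row_bound t l : - M%:Z <= prefix_row t l < 4 * M%:Z.
Proof.
case: t => [|t] /=; first by have := expn_gt0 2 k; lia.
have /andP [lo hi] := probe_bound (J t) l.
have := @ler_wpM2l _ M%:Z isT _ _ lo; have := @ler_wpM2l _ M%:Z isT _ _ hi.
by have := X_lt t; case: (l == _) => /=; lia.
Qed.

Lemma bounded_data : (0 < k)%N -> bounded (4 * k) data_mx.
Proof.
move=> k_gt0 t l; rewrite mxE.
have := prefix_row_bound t.+1 l; have := prefix_row_bound t l.
by have := expn_4k_ge k_gt0; lia.
Qed.

Lemma bounded_query s : (0 < k)%N -> bounded (4 * k) (query_mx s).
Proof.
move=> k_gt0 t l; rewrite mxE; have := probe_bound (J s) l.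
by have := expn_4k_ge k_gt0; have := expn_gt0 2 k; lia.
Qed.

End Gadget.

Section Summaries.

Variables (n k : nat) (s : forall m : nat, 'M[int]_(m, n) -> seq bool).
Variables (join : seq bool -> seq bool -> seq bool) (decode : seq bool -> int).
Hypothesis s_join : forall m0 m1 (A0 : 'M[int]_(m0, n)) (A1 : 'M[int]_(m1, n)),
  (0 < m0)%N -> (0 < m1)%N -> bounded (4 * k) A0 -> bounded (4 * k) A1 ->
  s (col_mx A0 A1) = join (s A0) (s A1).
Hypothesis s_decode : forall m (A : 'M[int]_(m, n)),
  (0 < m)%N -> bounded (4 * k) A -> decode (s A) = mu A.

Lemma summary_data_inj r X Y : (0 < n)%N -> (0 < k)%N -> (0 < r)%N ->
  (r <= size (intervals n))%N ->
  (forall t, (X t < 2 ^ k)%N) -> (forall t, (Y t < 2 ^ k)%N) ->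
  s (data_mx n k r X) = s (data_mx n k r Y) ->
  forall t, (t < r)%N -> X t = Y t.
Proof.
move=> n_gt0 k_gt0 r_gt0 r_le X_lt Y_lt eq_s t lt_t_r.
have decode_query Z : (forall t, (Z t < 2 ^ k)%N) ->
    decode (join (s (query_mx n k t)) (s (data_mx n k r Z))) =
    (query_height n k + 2 ^ k)%:Z * probe_sum (interval_at n t) (interval_at n t) + (Z t)%:Z.
  move=> Z_lt; have Bq : bounded (4 * k) (query_mx n k t) by exact: bounded_query.
  have Bd : bounded (4 * k) (data_mx n k r Z) by exact: bounded_data.
  rewrite -s_join // s_decode ?addn_gt0 //; last exact: bounded_col_mx.
  exact: mu_query_data.
by have := decode_query X X_lt; rewrite eq_s decode_query // => /addrI [].
Qed.

End Summaries.

(* Binary expansion behind a sentinel 1, hence injective. *)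
Definition bincode (bs : seq bool) : nat := foldr (fun (b : bool) acc => b + acc.*2)%N 1%N bs.

Lemma bincode_gt0 bs : (0 < bincode bs)%N.
Proof. by elim: bs => //= b bs IH; lia. Qed.

Lemma bincode_lt bs : (bincode bs < 2 ^ (size bs).+1)%N.
Proof. by elim: bs => //= b bs IH; rewrite expnS; lia. Qed.

Lemma bincode_inj : injective bincode.
Proof.
elim=> [|b bs IH] [|b' bs'] /=.
- by [].
- by have := bincode_gt0 bs'; lia.
- by have := bincode_gt0 bs; lia.
move=> eq_code; have eq_b : b = b' by move: eq_code; case: b; case: b' => //=; lia.
by rewrite eq_b (IH bs') //; move: eq_code; rewrite eq_b; lia.
Qed.

Lemma exists_long_image (T : finType) (f : T -> seq bool) m :
  injective f -> (2 ^ m <= #|T|)%N -> exists x, (m <= size (f x))%N.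
Proof.
move=> f_inj le_card; have [/existsP //|/existsPn short] := boolP [exists x, m <= size (f x)]%N.
have code_lt x : ((bincode (f x)).-1 < (2 ^ m).-1)%N.
  have := short x; rewrite -ltnNge => lt_m.
  have : (2 ^ (size (f x)).+1 <= 2 ^ m)%N by rewrite leq_exp2l.
  by have := bincode_lt (f x); have := bincode_gt0 (f x); lia.
have code_inj : injective (fun x => Ordinal (code_lt x)).
  move=> x y [] eq_code; apply/f_inj/bincode_inj.
  by have := bincode_gt0 (f x); have := bincode_gt0 (f y); lia.
by have := leq_card _ code_inj; rewrite card_ord; have := expn_gt0 2 m; lia.
Qed.

Definition ffun_nat r k (f : {ffun 'I_r -> 'I_k}) (t : nat) : nat :=
  oapp (fun i : 'I_r => val (f i)) 0%N (insub t).

Lemma ffun_nat_lt r k (f : {ffun 'I_r -> 'I_k}) t : (0 < k)%N -> (ffun_nat f t < k)%N.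
Proof. by move=> k_gt0; rewrite /ffun_nat; case: insub => //= i; exact: ltn_ord. Qed.

Lemma ffun_natE r k (f : {ffun 'I_r -> 'I_k}) (i : 'I_r) : ffun_nat f i = f i.
Proof. by rewrite /ffun_nat valK. Qed.

Theorem theorem6p7 :
  exists C d : nat, (0 < C)%N /\ (0 < d)%N /\
  forall (n k : nat), (0 < n)%N ->
  forall (s : forall m : nat, 'M[int]_(m, n) -> seq bool)
         (join : seq bool -> seq bool -> seq bool)
         (decode : seq bool -> int),
    (forall (m0 m1 : nat) (A0 : 'M[int]_(m0, n)) (A1 : 'M[int]_(m1, n)),
        (0 < m0)%N -> (0 < m1)%N ->
        bounded (C * k) A0 -> bounded (C * k) A1 ->
        s (m0 + m1)%N (col_mx A0 A1) = join (s m0 A0) (s m1 A1)) ->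
    (forall (m : nat) (A : 'M[int]_(m, n)),
        (0 < m)%N -> bounded (C * k) A -> decode (s m A) = mu A) ->
    forall r : nat, (0 < r)%N -> (r <= (n * n.+1) %/ 2)%N ->
      exists A : 'M[int]_(r, n),
        bounded (C * k) A /\ (k * r <= d * size (s r A))%N.
Proof.
exists 4%N, 1%N; do 2!split=> //.
move=> n k n_gt0 s join decode s_join s_decode r r_gt0 r_le.
have [->|k_gt0] := posnP k; first by exists 0; split=> // i j; rewrite mxE.
have r_le' : (r <= size (intervals n))%N by have := size_intervals n; lia.
have M_gt0 : (0 < 2 ^ k)%N by rewrite expn_gt0.
pose F (f : {ffun 'I_r -> 'I_(2 ^ k)}) := s r (data_mx n k r (ffun_nat f)).
have F_inj : injective F.
  move=> f g /(summary_data_inj s_join s_decode n_gt0 k_gt0 r_gt0 r_le') eq_fg.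
  apply/ffunP => i; apply/val_inj => /=; rewrite -!ffun_natE.
  by apply: eq_fg => // t; exact: ffun_nat_lt.
have [|f long] := @exists_long_image _ F (k * r) F_inj.
  by rewrite card_ffun !card_ord expnM.
exists (data_mx n k r (ffun_nat f)); rewrite mul1n; split=> //.
by apply: bounded_data => // t; exact: ffun_nat_lt.
Qed.
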